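(* Let $\Omega\subseteq\mathbb{F}$ be a P-closed set with finite P-basis $\mathcal{B}$, $n=\mathrm{Rk}(\Omega)$. For any $F\in\mathbb{F}[x;\sigma,\delta]_n$, $$\mathrm{wt}_\Omega(F)=\min\{\mathrm{wt_H}(E_\mathcal{A}(F)) : \mathcal{A}\text{ is a P-basis of }\Omega\}\le \mathrm{wt_H}(E_\mathcal{B}(F)),$$ equivalently, for $f\in\mathbb{F}^\mathcal{B}$, $\mathrm{wt}_\mathcal{B}(f)=\min\{\mathrm{wt_H}(\pi_{\mathcal{B},\mathcal{A}}(f)):\mathcal{A}\text{ a P-basis of }\Omega\}\le\mathrm{wt_H}(f)$.
   Context: $\mathbb{F}$ is a division ring, $\sigma$ a ring endomorphism of $\mathbb{F}$, $\delta$ a $\sigma$-derivation ($\delta$ additive, $\delta(ab)=\sigma(a)\delta(b)+\delta(a)b$). $\mathbb{F}[x;\sigma,\delta]$ is the skew polynomial ring (left $\mathbb{F}$-space with basis $x^i$, $xa=\sigma(a)x+\delta(a)$); $\mathbb{F}[x;\sigma,\delta]_n$ are those of degree $<n$. Evaluation: $F(a)$ is the unique element with $F-F(a)\in\mathbb{F}[x;\sigma,\delta](x-a)$; $E_\Omega(F)\in\mathbb{F}^\Omega$ is $a\mapsto F(a)$. $Z(A)$ is the set of common zeros of $A$, $I(\Omega)$ the left ideal of polynomials vanishing on $\Omega$, generated by its monic minimal-degree element $F_\Omega$; $\overline{\Omega}=Z(I(\Omega))$ is the P-closure, $\Omega$ is P-closed if $\overline\Omega=\Omega$, P-independent if no $a\in\Omega$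 lies in $\overline{\Omega\setminus\{a\}}$; a P-basis of a P-closed $\Omega$ is a P-independent generating subset. $\mathrm{Rk}(\Omega)=\deg F_\Omega$ equals the size of any P-basis. For a P-basis $\mathcal{B}$ with $n$ elements, $E_\mathcal{B}:\mathbb{F}[x;\sigma,\delta]_n\to\mathbb{F}^\mathcal{B}$ is bijective. Skew weight: $\mathrm{wt}_\Omega(F)=n-\mathrm{Rk}(Z(F)\cap\Omega)$ for $\deg F<n$, and $\mathrm{wt}_\mathcal{B}(E_\mathcal{B}(F))=\mathrm{wt}_\Omega(F)$. $\pi_{\mathcal{B},\mathcal{A}}(E_\mathcal{B}(F))=E_\mathcal{A}(F)$. For $f\in\mathbb{F}^\mathcal{A}$, the Hamming weight is $\mathrm{wt_H}(f)=\#\{a\in\mathcal{A}: f(a)\ne0\}$. *)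

From HB Require Import structures.
From mathcomp Require Import all_boot all_order all_algebra.
From Stdlib Require Import ClassicalEpsilon.
Set Implicit Arguments. Unset Strict Implicit. Unset Printing Implicit Defensive.
Import GRing.Theory.
Local Open Scope ring_scope.

Section Skew.
Variable F : unitRingType.
Variable sigma : F -> F.
Variable delta : F -> F.

(* A skew polynomial sum_i f_i x^i is represented by its (left) coefficient
   sequence, i.e. by an element of {poly F} used only as a left F-space. *)

(* x * (sum_j b_j x^j) = sum_j sigma(b_j) x^(j+1) + delta(b_j) x^j *)
Definition skew_mulX (p : {poly F}) : {poly F} :=
  map_poly sigma p * 'X + map_poly delta p.

Definition skew_mul (P G : {poly F}) : {poly F} :=
  \sum_(i < size P) P`_i *: iter i skew_mulX G.

Definition skew_eval (P : {poly F}) (a : F) : F :=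
  epsilon (inhabits 0)
    (fun e => exists Q : {poly F}, P - e%:P = skew_mul Q ('X - a%:P)).

Definition Zset (A : {poly F} -> Prop) : F -> Prop :=
  fun a => forall P, A P -> skew_eval P a = 0.
Definition Zpoly (P : {poly F}) : F -> Prop := Zset (fun Q => Q = P).

Definition Iset (Om : F -> Prop) : {poly F} -> Prop :=
  fun P => forall a, Om a -> skew_eval P a = 0.

Definition Pclosure (Om : F -> Prop) : F -> Prop := Zset (Iset Om).

Definition Pclosed (Om : F -> Prop) : Prop :=
  forall a, Pclosure Om a <-> Om a.

Definition Pindependent (Om : F -> Prop) : Prop :=
  forall a, Om a -> ~ Pclosure (fun b => Om b /\ b <> a) a.

Definition Pbasis (B : seq F) (Om : F -> Prop) : Prop :=
  [/\ uniq B, (forall b, b \in B -> Om b),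
      Pindependent (fun b => b \in B)
    & forall a, Pclosure (fun b => b \in B) a <-> Om a].

Definition rank_spec (Om : F -> Prop) (n : nat) : Prop :=
  (exists G : {poly F}, G \is monic /\ Iset Om G /\ size G = n.+1) /\
  (forall G : {poly F}, G != 0 -> Iset Om G -> (n.+1 <= size G)%N).

Definition Rk (Om : F -> Prop) : nat := epsilon (inhabits 0%N) (rank_spec Om).

Definition skew_wt (Om : F -> Prop) (P : {poly F}) : nat :=
  (Rk Om - Rk (fun a => Zpoly P a /\ Om a))%N.

Definition evalvec (A : seq F) (P : {poly F}) : seq F := map (skew_eval P) A.
Definition wtH (v : seq F) : nat := count (fun c => c != 0) v.

End Skew.

From HB Require Import structures.
From mathcomp Require Import all_boot all_order all_algebra.
From mathcomp Require Import zify.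
From Stdlib Require Import ClassicalEpsilon Classical.
Set Implicit Arguments. Unset Strict Implicit. Unset Printing Implicit Defensive.
Import GRing.Theory.
Local Open Scope ring_scope.

(* For a P-basis A of Omega, the points of A at which P vanishes are
   P-independent and lie in Z(P) cap Omega, so there are at most
   Rk(Z(P) cap Omega) of them; hence wt_H(E_A(P)) >= Rk(Omega) - Rk(Z(P) cap Omega).
   Conversely a P-basis of Z(P) cap Omega extends greedily to a P-basis of
   Omega, which has at least Rk(Z(P) cap Omega) zeros of P.  Both directions
   rest on the fact that adjoining a point a outside the P-closure of a set
   raises its rank by exactly one: if G is the minimal polynomial of the set,
   then (x - a^c) G, with a^c the (sigma,delta)-conjugate of a by c = G(a),
   is monic, one degree higher, and vanishes at a (the product rule). *)

Section SkewPolynomials.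
Variable F : unitRingType.
Hypothesis Fdiv : forall c : F, c != 0 -> c \is a GRing.unit.
Variable sigma : {rmorphism F -> F}.
Variable delta : F -> F.
Hypothesis delta_add : forall a b, delta (a + b) = delta a + delta b.
Hypothesis delta_mul : forall a b, delta (a * b) = sigma a * delta b + delta a * b.
Implicit Types (P Q G H p q : {poly F}).

Local Notation mulX := (skew_mulX sigma delta).
Local Notation smul := (skew_mul sigma delta).
Local Notation ev := (skew_eval sigma delta).

Lemma delta0 : delta 0 = 0.
Proof. by apply: (@addrI _ (delta 0)); rewrite -delta_add !addr0. Qed.

Lemma coef_neq0_lt_size p i : p`_i != 0 -> (i < size p)%N.
Proof. by apply: contraR; rewrite -leqNgt => ?; rewrite nth_default. Qed.

Lemma coef_mulX p i :
  (mulX p)`_i = (if i is j.+1 then sigma p`_j else 0) + delta p`_i.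
Proof.
rewrite /skew_mulX coefD coefMX (coef_map_id0 _ _ delta0) coef_map_id0 ?rmorph0 //.
by case: i.
Qed.

Lemma mulX0 : mulX 0 = 0.
Proof. by apply/polyP => -[|i]; rewrite coef_mulX !coef0 delta0 ?rmorph0 addr0. Qed.

Lemma mulXD p q : mulX (p + q) = mulX p + mulX q.
Proof.
apply/polyP => i; rewrite coefD !coef_mulX coefD delta_add.
by case: i => [|i]; rewrite ?add0r // coefD rmorphD addrACA.
Qed.

Lemma mulXZ c p : mulX (c *: p) = sigma c *: mulX p + delta c *: p.
Proof.
apply/polyP => i; rewrite [in LHS]coef_mulX [in RHS]coefD [in RHS]coefZ coef_mulX !coefZ delta_mul mulrDr.
by case: i => [|i]; rewrite ?mulr0 ?add0r // coefZ rmorphM addrA.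
Qed.

Lemma mulX_sum I (r : seq I) (Pr : pred I) (f : I -> {poly F}) :
  mulX (\sum_(i <- r | Pr i) f i) = \sum_(i <- r | Pr i) mulX (f i).
Proof. exact: (big_morph mulX mulXD mulX0). Qed.

Lemma size_mulX_le p : (size (mulX p) <= (size p).+1)%N.
Proof.
apply/leq_sizeP => j hj; rewrite coef_mulX [p`_j]nth_default ?delta0 ?addr0.
  by case: j hj => // j hj; rewrite nth_default ?rmorph0.
exact: leq_trans (leqnSn _) hj.
Qed.

Lemma mulX_monic p : p \is monic -> mulX p \is monic /\ size (mulX p) = (size p).+1.
Proof.
move=> mp; have sp : (0 < size p)%N by rewrite size_poly_gt0 monic_neq0.
have top : (mulX p)`_(size p) = 1.
  rewrite coef_mulX nth_default // delta0 addr0 -(prednK sp) /=.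
  by rewrite -lead_coefE (eqP mp) rmorph1.
have sz : size (mulX p) = (size p).+1.
  by apply/eqP; rewrite eqn_leq size_mulX_le coef_neq0_lt_size // top oner_neq0.
by rewrite monicE lead_coefE sz /= top.
Qed.

Lemma iter_mulXD k p q : iter k mulX (p + q) = iter k mulX p + iter k mulX q.
Proof. by elim: k => //= k ->; rewrite mulXD. Qed.

Lemma iter_mulX_monic k G : G \is monic ->
  iter k mulX G \is monic /\ size (iter k mulX G) = (size G + k)%N.
Proof.
move=> mG; elim: k => [|k [mk sk]] /=; first by rewrite addn0.
by have [-> ->] := mulX_monic mk; rewrite sk addnS.
Qed.

Lemma smul_widen P G n : (size P <= n)%N ->
  smul P G = \sum_(i < n) P`_i *: iter i mulX G.
Proof.
move=> Hn; rewrite /skew_mul -(subnKC Hn).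
elim: (n - size P)%N => [|k IH]; first by rewrite addn0.
by rewrite addnS big_ord_recr /= -IH nth_default ?leq_addr // scale0r addr0.
Qed.

Lemma smul_linearl c P Q G : smul (c *: P + Q) G = c *: smul P G + smul Q G.
Proof.
set n := maxn (size P) (size Q).
have sP : (size P <= n)%N by rewrite leq_maxl.
have sQ : (size Q <= n)%N by rewrite leq_maxr.
have sPQ : (size (c *: P + Q)%R <= n)%N.
  by rewrite (leq_trans (size_polyD _ _)) // geq_max sQ (leq_trans (size_scale_leq _ _)).
rewrite (smul_widen _ sPQ) (smul_widen _ sP) (smul_widen _ sQ).
rewrite scaler_sumr -big_split; apply: eq_bigr => i _.
by rewrite coefD coefZ scalerDl scalerA.
Qed.

Lemma smul0l G : smul 0 G = 0.
Proof. by rewrite (@smul_widen _ _ 0) ?size_poly0 // big_ord0. Qed.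

Lemma smulDl P Q G : smul (P + Q) G = smul P G + smul Q G.
Proof. by have := smul_linearl 1 P Q G; rewrite !scale1r. Qed.

Lemma smulZl c P G : smul (c *: P) G = c *: smul P G.
Proof. by rewrite -[c *: P]addr0 smul_linearl smul0l addr0. Qed.

Lemma smulBl P Q G : smul (P - Q) G = smul P G - smul Q G.
Proof. by rewrite addrC -scaleN1r smul_linearl scaleN1r addrC. Qed.

Lemma smul_suml I (r : seq I) (Pr : pred I) (f : I -> {poly F}) G :
  smul (\sum_(i <- r | Pr i) f i) G = \sum_(i <- r | Pr i) smul (f i) G.
Proof. exact: (big_morph (fun P => smul P G) (fun P Q => smulDl P Q G) (smul0l G)). Qed.

Lemma smulDr P G1 G2 : smul P (G1 + G2) = smul P G1 + smul P G2.
Proof.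
by rewrite /skew_mul -big_split; apply: eq_bigr => i _; rewrite iter_mulXD scalerDr.
Qed.

Lemma smulC c G : smul c%:P G = c *: G.
Proof. by rewrite (@smul_widen _ _ 1) ?size_polyC ?leq_b1 // big_ord1 coefC. Qed.

Lemma smulXn k G : smul 'X^k G = iter k mulX G.
Proof.
rewrite (@smul_widen _ _ k.+1) ?size_polyXn // big_ord_recr /= coefXn eqxx scale1r.
by rewrite big1 ?add0r // => i _; rewrite coefXn ltn_eqF ?scale0r.
Qed.

Lemma smulXsubC b G : smul ('X - b%:P) G = mulX G - b *: G.
Proof.
rewrite (@smul_widen _ _ 2) ?size_XsubC // !big_ord_recl big_ord0 addr0 /=.
by rewrite !coefB !coefX !coefC /= subr0 sub0r scale1r scaleNr addrC.
Qed.

Lemma smul_mulX Q G : smul (mulX Q) G = mulX (smul Q G).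
Proof.
rewrite (@smul_widen _ _ (size Q).+1) ?size_mulX_le // /skew_mul mulX_sum.
under eq_bigr do rewrite coef_mulX scalerDl.
rewrite big_split /= big_ord_recl big_ord_recr /= scale0r add0r nth_default //.
by rewrite delta0 scale0r addr0 -big_split; apply: eq_bigr => i _; rewrite mulXZ.
Qed.

Lemma smulA P Q G : smul (smul P Q) G = smul P (smul Q G).
Proof.
have smul_iter k R : smul (iter k mulX R) G = iter k mulX (smul R G).
  by elim: k => //= k <-; rewrite smul_mulX.
rewrite [smul P Q]/skew_mul smul_suml; apply: eq_bigr => i _.
by rewrite smulZl smul_iter.
Qed.

Lemma smulXsubC_monic b G : G \is monic ->
  smul ('X - b%:P) G \is monic /\ size (smul ('X - b%:P) G) = (size G).+1.
Proof.
move=> mG; have [mXG sXG] := mulX_monic mG.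
have lt : (size (- (b *: G)) < size (mulX G))%N.
  by rewrite size_polyN sXG ltnS size_scale_leq.
by rewrite smulXsubC monicE lead_coefDl // (eqP mXG) size_polyDl.
Qed.

Lemma size_smul_monic Q G : Q != 0 -> G \is monic ->
  ((size Q).-1 + (size G).-1 < size (smul Q G))%N.
Proof.
move=> nQ mG; have sG : (0 < size G)%N by rewrite size_poly_gt0 monic_neq0.
have sQ : (0 < size Q)%N by rewrite size_poly_gt0.
apply: coef_neq0_lt_size.
rewrite (smul_widen G (leqnn (size Q))) -(prednK sQ) big_ord_recr /= coefD coef_sum.
rewrite big1 ?add0r => [|i _]; last first.
  rewrite coefZ [X in _ * X]nth_default ?mulr0 //; have [_ ->] := iter_mulX_monic i mG.
  by rewrite -{1}(prednK sG) addSn -addnS addnC leq_add2r ltn_ord.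
have [mk sk] := iter_mulX_monic (size Q).-1 mG.
have -> : ((size Q).-1 + (size G).-1 = (size (iter (size Q).-1 mulX G)).-1)%N.
  by rewrite sk -{2}(prednK sG) addSn addnC.
by rewrite coefZ; move: (eqP mk); rewrite lead_coefE => ->; rewrite mulr1 -lead_coefE lead_coef_eq0.
Qed.

Lemma size_sub_lead_mulX H G : G \is monic -> (size G <= size H)%N ->
  (size (H - lead_coef H *: iter (size H - size G) mulX G)%R < size H)%N.
Proof.
move=> mG ge; set k := (size H - size G)%N.
have [mk sk] := iter_mulX_monic k mG.
have sH : size H = (size G + k)%N by rewrite subnKC.
have hpos : (0 < size H)%N by rewrite (leq_trans _ ge) // size_poly_gt0 monic_neq0.
rewrite -(prednK hpos) ltnS; apply/leq_sizeP => j; rewrite leq_eqVlt coefB coefZ.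
case/orP => [/eqP <-|hj].
  have -> : (iter k mulX G)`_(size H).-1 = 1.
    by move: (eqP mk); rewrite lead_coefE sk -sH.
  by rewrite -lead_coefE mulr1 subrr.
by rewrite !nth_default ?mulr0 ?subr0 // ?sk -?sH (leq_trans _ hj) // prednK.
Qed.

Lemma skew_divp G H : G \is monic ->
  exists Q R, H = smul Q G + R /\ (size R < size G)%N.
Proof.
move=> mG; elim: {H}(size H).+1 {-2}H (ltnSn (size H)) => // m IH H hH.
have [lt|ge] := ltnP (size H) (size G); first by exists 0, H; rewrite smul0l add0r.
have := size_sub_lead_mulX mG ge; set H' := H - _ => hH'.
have [Q [R [eH' sR]]] := IH H' (leq_trans hH' hH).
exists (lead_coef H *: 'X^(size H - size G) + Q), R; split => //.
by rewrite smul_linearl smulXn -addrA -eH' addrC subrK.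
Qed.

Lemma skew_eval_spec P a : exists Q, P - (ev P a)%:P = smul Q ('X - a%:P).
Proof.
apply: (epsilon_spec (inhabits 0) (fun e => exists Q, P - e%:P = smul Q ('X - a%:P))).
have [Q [R [eP sR]]] := skew_divp P (monicXsubC a).
rewrite size_XsubC in sR.
by exists R`_0, Q; rewrite eP -(size1_polyC sR) addrK.
Qed.

Lemma skew_eval_unique P a e Q : P - e%:P = smul Q ('X - a%:P) -> ev P a = e.
Proof.
move=> eP; have [Q' eQ'] := skew_eval_spec P a.
have h : e%:P - (ev P a)%:P = smul (Q' - Q) ('X - a%:P).
  by rewrite smulBl -eQ' -eP opprB [RHS]addrC addrA subrK.
have [QQ|nQQ] := eqVneq (Q' - Q) 0.
  by move: h; rewrite QQ smul0l => /eqP; rewrite subr_eq0 => /eqP /polyC_inj.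
have := size_smul_monic nQQ (monicXsubC a).
by rewrite -h size_XsubC addn1 ltnNge -polyCB size_polyC (leq_trans (leq_b1 _)).
Qed.

Lemma skew_eval_linear c P Q a : ev (c *: P + Q) a = c * ev P a + ev Q a.
Proof.
have [P1 e1] := skew_eval_spec P a; have [Q1 e2] := skew_eval_spec Q a.
apply: (@skew_eval_unique _ _ _ (c *: P1 + Q1)).
by rewrite smul_linearl -e1 -e2 polyCD -scale_polyC scalerBr opprD addrACA.
Qed.

Lemma skew_eval0 a : ev 0 a = 0.
Proof. by apply: (@skew_eval_unique _ _ _ 0); rewrite smul0l subr0. Qed.

Lemma skew_evalZ c P a : ev (c *: P) a = c * ev P a.
Proof. by have := skew_eval_linear c P 0 a; rewrite addr0 skew_eval0 addr0. Qed.

Lemma skew_evalB P Q a : ev (P - Q) a = ev P a - ev Q a.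
Proof.
by have := skew_eval_linear (-1) Q P a; rewrite scaleN1r mulN1r addrC => ->; rewrite addrC.
Qed.

Lemma skew_eval_smul_root H G a : ev G a = 0 -> ev (smul H G) a = 0.
Proof.
move=> eG; have [Q eQ] := skew_eval_spec G a; rewrite eG subr0 in eQ.
by apply: (@skew_eval_unique _ _ _ (smul H Q)); rewrite subr0 eQ smulA.
Qed.

(* The product rule: (x - a^c) G vanishes at a, where c = G(a) and
   a^c = (sigma(c) a + delta(c)) c^-1 is the (sigma,delta)-conjugate of a. *)
Lemma skew_eval_conj_root G a : ev G a != 0 ->
  ev (smul ('X - ((sigma (ev G a) * a + delta (ev G a)) / ev G a)%:P) G) a = 0.
Proof.
set c := ev G a; set b := (_ / _) => nc.
have [Q eQ] := skew_eval_spec G a.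
have -> : G = smul Q ('X - a%:P) + c%:P by rewrite -eQ subrK.
apply: (@skew_eval_unique _ _ _ (smul ('X - b%:P) Q + (sigma c)%:P)).
rewrite subr0 smulDr -smulA smulDl; congr (_ + _).
rewrite smulC smulXsubC; apply/polyP => i.
rewrite coefB coef_mulX !coefZ coefB coefX !coefC.
case: i => [|[|i]] /=; rewrite ?mulr0 ?mulr1 ?subr0 ?sub0r ?delta0 ?addr0 ?rmorph0 //.
- by rewrite add0r /b -mulrA mulVr ?Fdiv // mulr1 opprD addrCA subrr addr0 mulrN.
- by rewrite coefC /= mulr1.
- by rewrite coefC mulr0 rmorph0.
Qed.

Implicit Types (X Y T : F -> Prop).
Local Notation Iset := (Iset sigma delta).
Local Notation cl := (Pclosure sigma delta).
Local Notation Rk := (Rk sigma delta).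
Local Notation Pindependent := (Pindependent sigma delta).

(* Rk X is a junk value unless X is P-algebraic, i.e. I(X) is nonzero. *)
Definition Palgebraic X := exists G, G != 0 /\ Iset X G.
Definition incl X Y := forall a, X a -> Y a.
Definition addpt X s := fun a => X a \/ a = s.

Lemma Iset_Pclosure X Y G : incl X (cl Y) -> Iset Y G -> Iset X G.
Proof. by move=> XY hG a /XY; apply. Qed.

Lemma Pclosure_ext X : incl X (cl X).
Proof. by move=> a Xa G; apply. Qed.

Lemma incl_Pclosure X Y : incl X Y -> incl X (cl Y).
Proof. by move=> XY a /XY; apply: Pclosure_ext. Qed.

Lemma Pclosure_min X Y : incl X (cl Y) -> incl (cl X) (cl Y).
Proof. by move=> XY a clXa G hG; apply: clXa; apply: Iset_Pclosure hG. Qed.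

Lemma Palgebraic_Pclosure X Y : incl X (cl Y) -> Palgebraic Y -> Palgebraic X.
Proof. by move=> XY [G [nG hG]]; exists G; split => //; apply: Iset_Pclosure hG. Qed.

Lemma IsetZ X c G : Iset X G -> Iset X (c *: G).
Proof. by move=> hG a Xa; rewrite skew_evalZ hG // mulr0. Qed.

Lemma IsetB X P Q : Iset X P -> Iset X Q -> Iset X (P - Q).
Proof. by move=> hP hQ a Xa; rewrite skew_evalB hP // hQ // subrr. Qed.

Lemma Iset_smul X H G : Iset X G -> Iset X (smul H G).
Proof. by move=> hG a Xa; apply/skew_eval_smul_root/hG. Qed.

Lemma Iset_min_size X : Palgebraic X ->
  exists G, [/\ G != 0, Iset X G & forall H, H != 0 -> Iset X H -> (size G <= size H)%N].
Proof.
move=> [G0 [nG0 hG0]]; elim: {G0}(size G0).+1 {-2}G0 (ltnSn (size G0)) nG0 hG0 => //.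
move=> m IH G0 sG0 nG0 hG0.
have [[H [nH hH ltH]]|nosmaller] :=
  classic (exists H, [/\ H != 0, Iset X H & (size H < size G0)%N]).
  exact: IH (leq_trans ltH sG0) nH hH.
exists G0; split => // H nH hH; rewrite leqNgt; apply/negP => ltH.
by apply: nosmaller; exists H.
Qed.

Lemma monic_scale_lead G : G != 0 ->
  (lead_coef G)^-1 *: G \is monic /\ size ((lead_coef G)^-1 *: G) = size G.
Proof.
move=> nG; have sG : (0 < size G)%N by rewrite size_poly_gt0.
have top : ((lead_coef G)^-1 *: G)`_(size G).-1 = 1.
  by rewrite coefZ -lead_coefE mulVr ?Fdiv ?lead_coef_eq0.
have sz : size ((lead_coef G)^-1 *: G) = size G.
  apply/eqP; rewrite eqn_leq size_scale_leq -{1}(prednK sG).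
  by rewrite coef_neq0_lt_size // top oner_neq0.
by rewrite monicE lead_coefE sz top.
Qed.

Lemma Rk_spec X : Palgebraic X -> rank_spec sigma delta X (Rk X).
Proof.
move=> /Iset_min_size [G [nG hG minG]]; apply: epsilon_spec.
have [mG' sG'] := monic_scale_lead nG.
have sG : (0 < size G)%N by rewrite size_poly_gt0.
exists (size G).-1; rewrite /rank_spec prednK //; split; last exact: minG.
by exists ((lead_coef G)^-1 *: G); split; [|split; [apply: IsetZ|]].
Qed.

Lemma Rk_lt_size X G : Palgebraic X -> G != 0 -> Iset X G -> (Rk X < size G)%N.
Proof. by move=> /Rk_spec [_]; apply. Qed.

Lemma Rk_minpoly X : Palgebraic X ->
  exists G, [/\ G \is monic, Iset X G & size G = (Rk X).+1].
Proof. by move=> /Rk_spec [[G [mG [hG sG]]] _]; exists G. Qed.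

Lemma Rk_le_Pclosure X Y : Palgebraic Y -> incl X (cl Y) -> (Rk X <= Rk Y)%N.
Proof.
move=> algY XY; have [G [mG hG sG]] := Rk_minpoly algY.
rewrite -ltnS -sG Rk_lt_size ?monic_neq0 //; first exact: Palgebraic_Pclosure algY.
exact: Iset_Pclosure hG.
Qed.

Lemma Rk_le_incl X Y : Palgebraic Y -> incl X Y -> (Rk X <= Rk Y)%N.
Proof. by move=> algY /incl_Pclosure; apply: Rk_le_Pclosure. Qed.

Lemma Rk_addpt_le X s : Palgebraic X ->
  Palgebraic (addpt X s) /\ (Rk (addpt X s) <= (Rk X).+1)%N.
Proof.
move=> algX; have [G [mG hG sG]] := Rk_minpoly algX.
suff [H [mH hH sH]] : exists H, [/\ H \is monic, Iset (addpt X s) H & (size H <= (size G).+1)%N].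
  have algXs : Palgebraic (addpt X s) by exists H; rewrite monic_neq0.
  by split => //; rewrite -ltnS -sG (leq_trans _ sH) // Rk_lt_size // monic_neq0.
have [Gs0|nGs] := eqVneq (ev G s) 0.
  by exists G; split => // a [/hG|->].
have [mH sH] := smulXsubC_monic ((sigma (ev G s) * s + delta (ev G s)) / ev G s) mG.
exists (smul ('X - ((sigma (ev G s) * s + delta (ev G s)) / ev G s)%:P) G).
split=> //; last by rewrite sH.
by move=> a [Xa|->]; [apply: skew_eval_smul_root; apply: hG | apply: skew_eval_conj_root].
Qed.

Lemma Rk_addpt_gt X s : Palgebraic X -> ~ cl X s -> (Rk X < Rk (addpt X s))%N.
Proof.
move=> algX nclXs; have [algXs _] := Rk_addpt_le s algX.
have le : (Rk X <= Rk (addpt X s))%N by apply: Rk_le_incl => // a Xa; left.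
rewrite ltn_neqAle le andbT; apply/negP => /eqP eqRk; apply: nclXs => P hP.
have [G [mG hG sG]] := Rk_minpoly algXs.
have [Q [R [eP sR]]] := skew_divp P mG.
suff R0 : R = 0 by rewrite eP R0 addr0; apply/skew_eval_smul_root/hG; right.
have hR : Iset X R.
  have -> : R = P - smul Q G by rewrite eP addrC addKr.
  by apply: IsetB => //; apply: Iset_smul => a Xa; apply: hG; left.
apply/eqP; apply: contraT => nR; have := Rk_lt_size algX nR hR.
by rewrite ltnNge -ltnS eqRk -sG sR.
Qed.

Definition in_seq (C : seq F) : F -> Prop := fun b => b \in C.

Lemma Rk_seq C : Palgebraic (in_seq C) /\ (Rk (in_seq C) <= size C)%N.
Proof.
elim: C => [|c C [algC leC]].
  have I1 : Iset (in_seq [::]) 1 by [].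
  have alg0 : Palgebraic (in_seq [::]) by exists 1; rewrite oner_neq0.
  by split => //; have := Rk_lt_size alg0 (oner_neq0 _) I1; rewrite size_poly1.
have [algCc leCc] := Rk_addpt_le c algC.
have cCc : incl (in_seq (c :: C)) (cl (addpt (in_seq C) c)).
  by apply: incl_Pclosure => b; rewrite /in_seq in_cons => /predU1P [->|bC]; [right|left].
split; first exact: Palgebraic_Pclosure cCc algCc.
by rewrite (leq_trans (Rk_le_Pclosure algCc cCc)) // (leq_trans leCc).
Qed.

Lemma Rk_seq_cons_gt C s : ~ cl (in_seq C) s -> (Rk (in_seq C) < Rk (in_seq (s :: C)))%N.
Proof.
move=> nclCs; have [algC _] := Rk_seq C; have [algsC _] := Rk_seq (s :: C).
apply: leq_trans (Rk_addpt_gt algC nclCs) _; apply: Rk_le_incl => // b.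
by rewrite /in_seq in_cons => -[->|->]; rewrite ?eqxx ?orbT.
Qed.

Lemma Rk_seq_lt_size A a : a \in A -> cl (fun b => b \in A /\ b <> a) a ->
  (Rk (in_seq A) < size A)%N.
Proof.
move=> aA clAa; set L := [seq b <- A | b != a].
have [algL leL] := Rk_seq L.
have AL : incl (in_seq A) (cl (in_seq L)).
  have rest : incl (fun b => b \in A /\ b <> a) (cl (in_seq L)).
    by apply: incl_Pclosure => b [bA /eqP ba]; rewrite /in_seq mem_filter ba.
  move=> b bA; have [->|/eqP ba] := eqVneq b a; first exact: Pclosure_min clAa.
  exact: rest.
have ltL : (size L < size A)%N.
  rewrite size_filter -(count_predC (fun b => b != a)) -[X in (X < _)%N]addn0 ltn_add2l.
  by rewrite -has_count; apply/hasP; exists a; rewrite //= negbK.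
exact: leq_ltn_trans (Rk_le_Pclosure algL AL) (leq_ltn_trans leL ltL).
Qed.

Lemma Pindependent_incl X Y : incl X Y -> Pindependent Y -> Pindependent X.
Proof.
move=> XY indY a Xa clXa; apply: (indY a (XY a Xa)); apply: Pclosure_min clXa.
by apply: incl_Pclosure => b [Xb ba]; split => //; apply: XY.
Qed.

Lemma Rk_Pindependent C : uniq C -> Pindependent (in_seq C) -> Rk (in_seq C) = size C.
Proof.
elim: C => [|c C IH] /= => [_ _|/andP [cnC uC] indcC].
  by apply/eqP; rewrite -leqn0; have [_ ->] := Rk_seq [::].
have indC : Pindependent (in_seq C).
  by apply: Pindependent_incl indcC => b bC; rewrite /in_seq in_cons bC orbT.
have nclCc : ~ cl (in_seq C) c.
  move=> clCc; apply: (indcC c (mem_head _ _)); apply: Pclosure_min clCc.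
  apply: incl_Pclosure => b bC; split; first by rewrite /in_seq in_cons bC orbT.
  by move=> eb; rewrite -eb bC in cnC.
apply/eqP; rewrite eqn_leq; have [_ -> /=] := Rk_seq (c :: C).
by rewrite -(IH uC indC) Rk_seq_cons_gt.
Qed.

Lemma Pindependent_cons C s : uniq C -> Pindependent (in_seq C) -> ~ cl (in_seq C) s ->
  uniq (s :: C) /\ Pindependent (in_seq (s :: C)).
Proof.
move=> uC indC nclCs.
have sC : s \notin C by apply/negP => sC; apply/nclCs/Pclosure_ext.
split=> [|a asC clsCa]; first by rewrite /= sC.
have := Rk_seq_cons_gt nclCs; rewrite Rk_Pindependent //.
by rewrite ltnNge -ltnS (Rk_seq_lt_size asC clsCa).
Qed.

(* Greedy; terminates because independent subsets of T have at most Rk T points. *)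
Lemma Pindependent_extend T C : Palgebraic T ->
  uniq C -> Pindependent (in_seq C) -> incl (in_seq C) T ->
  exists A, [/\ uniq A, Pindependent (in_seq A), incl (in_seq A) T,
                incl T (cl (in_seq A)) & {subset C <= A}].
Proof.
move=> algT; suff: forall k C, (Rk T - size C < k)%N ->
    uniq C -> Pindependent (in_seq C) -> incl (in_seq C) T ->
  exists A, [/\ uniq A, Pindependent (in_seq A), incl (in_seq A) T,
                incl T (cl (in_seq A)) & {subset C <= A}].
  by apply; apply: ltnSn.
elim=> // k IH {}C hk uC indC CT.
have [[s [Ts nclCs]]|allcl] := classic (exists s, T s /\ ~ cl (in_seq C) s); last first.
  by exists C; split => // a Ta; apply: NNPP => nclCa; apply: allcl; exists a.
have [usC indsC] := Pindependent_cons uC indC nclCs.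
have sCT : incl (in_seq (s :: C)) T.
  by move=> b; rewrite /in_seq in_cons => /predU1P [->|/CT].
have := Rk_le_incl algT sCT; rewrite Rk_Pindependent //= => szRk.
have hk' : (Rk T - size (s :: C) < k)%N by move: hk szRk => /=; lia.
have [A [uA indA AT TA CA]] := IH (s :: C) hk' usC indsC sCT.
by exists A; split => // b bC; apply: CA; rewrite in_cons bC orbT.
Qed.

Local Notation Pbasis := (Pbasis sigma delta).
Local Notation skew_wt := (skew_wt sigma delta).
Local Notation evalvec := (evalvec sigma delta).

Lemma Rk_Pbasis Om A : Pbasis A Om -> Palgebraic Om /\ Rk Om = size A.
Proof.
move=> [uA AOm indA clA]; have [algA _] := Rk_seq A.
have OmA : incl Om (cl (in_seq A)) by move=> a /clA.
have algOm := Palgebraic_Pclosure OmA algA.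
split=> //; rewrite -(Rk_Pindependent uA indA); apply/eqP.
by rewrite eqn_leq Rk_le_Pclosure // Rk_le_incl.
Qed.

Lemma wtH_evalvec A P :
  wtH (evalvec A P) = (size A - size [seq a <- A | ev P a == 0%R])%N.
Proof.
rewrite /wtH /evalvec count_map size_filter -(count_predC (fun a => ev P a == 0) A).
by rewrite addKn.
Qed.

Lemma skew_wt_le_wtH Om A P : Pbasis A Om -> (skew_wt Om P <= wtH (evalvec A P))%N.
Proof.
move=> bA; have [uA AOm indA _] := bA; have [algOm RkOm] := Rk_Pbasis bA.
set A0 := [seq a <- A | ev P a == 0].
have indA0 : Pindependent (in_seq A0).
  by apply: Pindependent_incl indA => b; rewrite /in_seq mem_filter => /andP [].
have A0Z : incl (in_seq A0) (fun a => Zpoly sigma delta P a /\ Om a).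
  by move=> b; rewrite /in_seq mem_filter => /andP [/eqP Pb /AOm]; split => // Q ->.
have algZ : Palgebraic (fun a => Zpoly sigma delta P a /\ Om a).
  by apply: Palgebraic_Pclosure algOm; apply: incl_Pclosure => a [].
have := Rk_le_incl algZ A0Z; rewrite Rk_Pindependent ?filter_uniq // => le0.
by rewrite wtH_evalvec /skew_wt RkOm leq_sub2l.
Qed.

Lemma skew_wt_attained Om B P : Pclosed sigma delta Om -> Pbasis B Om ->
  exists A, Pbasis A Om /\ wtH (evalvec A P) = skew_wt Om P.
Proof.
move=> clOm bB; have [algOm _] := Rk_Pbasis bB.
pose Z := fun a => Zpoly sigma delta P a /\ Om a.
have algZ : Palgebraic Z by apply: Palgebraic_Pclosure algOm; apply: incl_Pclosure => a [].
have indnil : Pindependent (in_seq [::]) by [].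
have nilZ : incl (in_seq [::]) Z by [].
have [C [uC indC CZ ZC _]] := Pindependent_extend algZ (isT : uniq [::]) indnil nilZ.
have COm : incl (in_seq C) Om by move=> b /CZ [].
have [A [uA indA AOm OmA CA]] := Pindependent_extend algOm uC indC COm.
have bA : Pbasis A Om.
  split=> // a; split=> [clAa|/OmA //].
  by apply/clOm; apply: Pclosure_min clAa; apply: incl_Pclosure.
exists A; split=> //; apply/eqP; rewrite eqn_leq skew_wt_le_wtH // andbT.
have zerosA : (size C <= size [seq a <- A | ev P a == 0%R])%N.
  apply: uniq_leq_size => // b bC; rewrite mem_filter (CA b bC) andbT.
  by have [Pb _] := CZ b bC; rewrite (Pb P).
have RkZ : (Rk Z <= size C)%N.
  by rewrite -(Rk_Pindependent uC indC); apply: Rk_le_Pclosure ZC; case: (Rk_seq C).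
rewrite wtH_evalvec /skew_wt -/Z; have [_ ->] := Rk_Pbasis bA.
by move: zerosA RkZ; lia.
Qed.

End SkewPolynomials.

Theorem mainTheorem3 (F : unitRingType)
  (Fdiv : forall c : F, c != 0 -> c \is a GRing.unit)
  (sigma : {rmorphism F -> F}) (delta : F -> F)
  (delta_add : forall a b, delta (a + b) = delta a + delta b)
  (delta_mul : forall a b, delta (a * b) = sigma a * delta b + delta a * b)
  (Om : F -> Prop) (B : seq F)
  (HOm : Pclosed sigma delta Om) (HB : Pbasis sigma delta B Om)
  (P : {poly F}) (HP : (size P <= Rk sigma delta Om)%N) :
  let w := skew_wt sigma delta Om P in
  [/\ (exists A : seq F, Pbasis sigma delta A Om /\
         wtH (evalvec sigma delta A P) = w),
      (forall A : seq F, Pbasis sigma delta A Om ->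
         (w <= wtH (evalvec sigma delta A P))%N)
    & (w <= wtH (evalvec sigma delta B P))%N].
Proof.
have le_wtH A := @skew_wt_le_wtH F Fdiv sigma delta delta_add delta_mul Om A P.
split; [exact: skew_wt_attained HOm HB | exact: le_wtH | exact: le_wtH HB].
Qed.
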